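(* Let the Algorithm and assumptions (A1)–(A4) be as in the context, with constants $L_H,K_H,\delta_g,\delta_H,\nu$, and assume $\sigma_0\le2\gamma L_H$. Suppose the algorithm does not terminate at the $N$-th iteration and that for every iteration $k$, $\delta_g\le\frac{9\delta_H^2}{4\sigma_k}$ and \[ \delta_H\le\min\Big\{\min\{\tfrac1{18},\tfrac{1-\rho_{TH}}{9}\}\big(\sqrt{K_H^2+4\sigma_k\varepsilon_g}-K_H\big),\ \min\{\tfrac19,\tfrac{2(1-\rho_{TH})}{9}\}\nu\varepsilon_H\Big\}. \] Assume $f$ attains its minimum $f_{\min}$ over $\mathcal M$. Let $\mathcal N_{succ}$ be the set of successful iterations (those $k$ with $\rho_k\ge\rho_{TH}$) performed before termination. Then \[ |\mathcal N_{succ}|\le\frac{f(x_0)-f_{\min}}{\rho_{TH}\kappa_\sigma}\max\{\varepsilon_g^{-2},\varepsilon_H^{-3}\}+1, \qquad \kappa_\sigma:=\min\Big\{\frac{\nu^3}{24\gamma^2L_H^2},\ \frac1{2\sqrt3}\min\Big\{\frac1{K_H},\frac1{\sqrt{2\gamma L_H}}\Big\}\Big\}. \]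
   Context: Let $\mathcal M$ be a connected complete Riemannian manifold; $\langle\cdot,\cdot\rangle$ and $\|\cdot\|$ denote the inner product and norm on tangent spaces $T_x\mathcal M$. Let $f=\frac1n\sum_{i=1}^n f_i$ with each $f_i:\mathcal M\to\mathbb R$ twice continuously differentiable; $\mathrm{grad} f$ is the Riemannian gradient. A retraction is a smooth map $R:T\mathcal M\to\mathcal M$ whose restriction $R_x$ to $T_x\mathcal M$ satisfies $R_x(0_x)=x$, $DR_x(0_x)=\mathrm{Id}$. $\nabla^2 f\circ R_x(0_x)$ is the Hessian at $0_x$ of $f\circ R_x$ on the inner-product space $T_x\mathcal M$. $\lambda_{\min}(H)$ denotes the smallest eigenvalue of a self-adjoint operator $H$. Algorithm: fix $\varepsilon_g,\varepsilon_H,\rho_{TH}\in(0,1)$, $\gamma>1$, $x_0\in\mathcal M$, $\sigma_0>0$. At iteration $k$: construct $G_k\in T_{x_k}\mathcal M$ and self-adjoint linear $H_k$ on $T_{x_k}\mathcal M$; if $\|G_k\|\le\varepsilon_g$ and $\lambda_{\min}(H_k)\ge-\varepsilon_H$, stop; otherwise choose $\eta_k\in T_{x_k}\mathcal M$ approximately minimizing $m_k(\eta):=\langle G_k,\eta\rangle+\frac12\langle H_k[\eta],\eta\rangle+\frac13\sigma_k\|\eta\|^3$, set $\rho_k=\frac{f(x_k)-f\circ R_{x_k}(\eta_k)}{-m_k(\eta_k)}$; if $\rho_k\ge\rho_{TH}$ (successful iteration) set $x_{k+1}=R_{x_k}(\eta_k)$, $\sigma_{k+1}=\sigma_k/\gamma$,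 else (unsuccessful) $x_{k+1}=x_k$, $\sigma_{k+1}=\gamma\sigma_k$. Cauchy point and eigenpoint: $\eta_k^C:=-\alpha^C G_k$ with $\alpha^C\in\arg\min_{\alpha\ge0}m_k(-\alpha G_k)$. Fix $\nu\in(0,1)$. When $\lambda_{\min}(H_k)<0$, $\eta_k^E:=\alpha^E u_k$ where $u_k$ satisfies $\langle u_k,H_k[u_k]\rangle\le\nu\lambda_{\min}(H_k)\|u_k\|^2<0$ and $\langle G_k,u_k\rangle\le0$, and $\alpha^E\in\arg\min_{\alpha\ge0}m_k(\alpha u_k)$. Assumptions: (A1) there is $L_H>0$ with $\big|f\circ R_{x_k}(\eta_k)-f(x_k)-\langle\mathrm{grad} f(x_k),\eta_k\rangle-\frac12\langle\nabla^2 f\circ R_{x_k}(0_{x_k})[\eta_k],\eta_k\rangle\big|\le\frac12L_H\|\eta_k\|^3$ for all $k$. (A2) there is $K_H>0$ with $\|H_k\|:=\sup_{\|\eta\|\le1}\langle\eta,H_k[\eta]\rangle\le K_H$ for all $k$. (A3) there are $\delta_g,\delta_H\in(0,1)$ with $\|G_k-\mathrm{grad} f(x_k)\|\le\delta_g$ and $\|(H_k-\nabla^2 f\circ R_{x_k}(0_{x_k}))[\eta_k]\|\le\delta_H\|\eta_k\|$ for all $k$. (A4) for all $k$, $-m_k(\eta_k)\ge-m_k(\eta_k^C)$, and $-m_k(\eta_k)\ge-m_k(\eta_k^E)$ whenever $\lambda_{\min}(H_k)<0$. *)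

From HB Require Import structures.
From mathcomp Require Import all_boot all_order all_algebra.
From mathcomp Require Import all_classical all_reals all_analysis.
Set Implicit Arguments. Unset Strict Implicit. Unset Printing Implicit Defensive.
Import Order.TTheory GRing.Theory Num.Theory.
Import numFieldNormedType.Exports.
Local Open Scope classical_set_scope.
Local Open Scope ring_scope.

(* Tangent spaces T_x M are represented in orthonormal coordinates as 'rV[R]_d
   with the Euclidean inner product; self-adjoint operators are symmetric
   matrices acting by  A[v] := v *m A^T  (row-vector convention). *)
Section Defs.
Context {R : realType} {d : nat}.

Definition dotv (u v : 'rV[R]_d) : R := (u *m v^T) 0 0.
Definition enorm (u : 'rV[R]_d) : R := Num.sqrt (dotv u u).
Definition opapp (A : 'M[R]_d) (v : 'rV[R]_d) : 'rV[R]_d := v *m A^T.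
Definition qform (A : 'M[R]_d) (v : 'rV[R]_d) : R := dotv (opapp A v) v.
Definition lam_min (A : 'M[R]_d) : R := inf [set a | eigenvalue A a].
Definition opnorm (A : 'M[R]_d) : R :=
  sup [set qform A e | e in [set e | enorm e <= 1]].

Definition unitv (i : 'I_d) : 'rV[R]_d := delta_mx 0 i.
Definition grad0 (g : 'rV[R]_d -> R) : 'rV[R]_d :=
  \row_i derive g 0 (unitv i).
Definition hess0 (g : 'rV[R]_d -> R) : 'M[R]_d :=
  \matrix_(i, j) derive (fun w => derive g w (unitv i)) 0 (unitv j).
Definition C2 (g : 'rV[R]_d -> R) : Prop :=
  (forall v, differentiable g v) /\
  (forall i v, differentiable (fun w => derive g w (unitv i)) v) /\
  (forall i j, continuous
     (fun w => derive (fun u => derive g u (unitv i)) w (unitv j))).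

Definition cmodel (G : 'rV[R]_d) (H : 'M[R]_d) (sigma : R) (eta : 'rV[R]_d) : R :=
  dotv G eta + 2^-1 * qform H eta + sigma / 3 * enorm eta ^+ 3.

Definition is_argmin_ray (G : 'rV[R]_d) (H : 'M[R]_d) (sigma : R)
  (u : 'rV[R]_d) (alpha : R) : Prop :=
  0 <= alpha /\ forall beta, 0 <= beta ->
    cmodel G H sigma (alpha *: u) <= cmodel G H sigma (beta *: u).

End Defs.

Definition favg {R : realType} {M : Type} (n : nat) (fs : 'I_n -> M -> R) (y : M) : R :=
  (n%:R)^-1 * \sum_(i < n) fs i y.

(* In every iteration the model decreases by at least
   kappa(sigma_k) * min(eps_g^2, eps_H^3): along the Cauchy ray when the gradient is
   large, along the negative curvature direction u_k otherwise.  Once sigma_k >= 2 L_H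
   the cubic term of the model absorbs the Taylor error of (A1), and the accuracy
   conditions bound sigma_k^2 times the inexactness errors of (A3) by
   16 delta_H^3 <= (1 - rho_TH) sigma_k^2 (-m_k(eta_k)); so such an iteration is
   successful.  Hence sigma_k never exceeds 2 gamma L_H, every successful iteration
   lowers f by at least rho_TH kappa_sigma min(eps_g^2, eps_H^3), and f cannot go
   below f_min. *)

From HB Require Import structures.
From mathcomp Require Import all_boot all_order all_algebra.
From mathcomp Require Import all_classical all_reals all_analysis.
From mathcomp Require Import ring lra.
Import Order.TTheory GRing.Theory Num.Theory.
Import numFieldNormedType.Exports.
Local Open Scope classical_set_scope.
Local Open Scope ring_scope.

Set Implicit Arguments. Unset Strict Implicit.

Section Euclid.
Variables (R : realType) (d : nat).
Implicit Types (u v w : 'rV[R]_d) (A B : 'M[R]_d).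

Lemma dotvE u v : dotv u v = \sum_j u 0 j * v 0 j.
Proof. by rewrite /dotv !mxE; apply: eq_bigr => j _; rewrite mxE. Qed.

Lemma dotvC u v : dotv u v = dotv v u.
Proof. by rewrite !dotvE; apply: eq_bigr => j _; rewrite mulrC. Qed.

Lemma dotvDl u w v : dotv (u + w) v = dotv u v + dotv w v.
Proof. by rewrite !dotvE -big_split; apply: eq_bigr => j _; rewrite mxE mulrDl. Qed.

Lemma dotvZl a u v : dotv (a *: u) v = a * dotv u v.
Proof. by rewrite !dotvE mulr_sumr; apply: eq_bigr => j _; rewrite mxE mulrA. Qed.

Lemma dotvZr a u v : dotv u (a *: v) = a * dotv u v.
Proof. by rewrite dotvC dotvZl dotvC. Qed.

Lemma dotvNl u v : dotv (- u) v = - dotv u v.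
Proof. by rewrite -scaleN1r dotvZl mulN1r. Qed.

Lemma dotvNr u v : dotv u (- v) = - dotv u v.
Proof. by rewrite dotvC dotvNl dotvC. Qed.

Lemma dotvBl u w v : dotv (u - w) v = dotv u v - dotv w v.
Proof. by rewrite dotvDl dotvNl. Qed.

Lemma dotv0l v : dotv 0 v = 0.
Proof. by rewrite -(scale0r 0) dotvZl mul0r. Qed.

Lemma dotvv_ge0 u : 0 <= dotv u u.
Proof. by rewrite dotvE; apply: sumr_ge0 => j _; rewrite -expr2 sqr_ge0. Qed.

Lemma dotvv_eq0 u : (dotv u u == 0) = (u == 0).
Proof.
apply/idP/eqP => [|->]; last by rewrite dotv0l.
rewrite dotvE psumr_eq0 => [/allP u0|j _]; last by rewrite -expr2 sqr_ge0.
apply/rowP => j; rewrite mxE.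
by have := u0 j (mem_index_enum j); rewrite /= mulf_eq0 orbb => /eqP.
Qed.

Lemma enorm_ge0 u : 0 <= enorm u.
Proof. exact: sqrtr_ge0. Qed.

Lemma sqr_enorm u : enorm u ^+ 2 = dotv u u.
Proof. by rewrite /enorm sqr_sqrtr // dotvv_ge0. Qed.

Lemma enorm_eq0 u : (enorm u == 0) = (u == 0).
Proof. by rewrite -sqrf_eq0 sqr_enorm dotvv_eq0. Qed.

Lemma enorm_gt0 u : (0 < enorm u) = (u != 0).
Proof. by rewrite lt_neqAle enorm_ge0 andbT eq_sym enorm_eq0. Qed.

Lemma enormZ a u : 0 <= a -> enorm (a *: u) = a * enorm u.
Proof.
move=> a0; rewrite /enorm dotvZl dotvZr mulrA -expr2 sqrtrM ?sqr_ge0 //.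
by rewrite sqrtr_sqr ger0_norm.
Qed.

Lemma enormN u : enorm (- u) = enorm u.
Proof. by rewrite /enorm dotvNl dotvNr opprK. Qed.

Lemma dotv_le_enorm u v : dotv u v <= enorm u * enorm v.
Proof.
have [->|u0] := eqVneq u 0; first by rewrite dotv0l mulr_ge0 ?enorm_ge0.
have [->|v0] := eqVneq v 0; first by rewrite dotvC dotv0l mulr_ge0 ?enorm_ge0.
have pu : 0 < enorm u by rewrite enorm_gt0.
have pv : 0 < enorm v by rewrite enorm_gt0.
have := dotvv_ge0 (enorm v *: u - enorm u *: v).
rewrite !dotvBl ![dotv _ (_ - _)]dotvC !dotvBl !dotvZl !dotvZr (dotvC v u).
rewrite -!sqr_enorm => h.
have : (2 * enorm u * enorm v) * dotv u v <=
       (2 * enorm u * enorm v) * (enorm u * enorm v) by nra.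
by rewrite ler_pM2l // !mulr_gt0.
Qed.

Lemma abs_coord_le1 u j : enorm u <= 1 -> `|u 0 j| <= 1.
Proof.
move=> u1; rewrite -(ler_pXn2r (n := 2)) ?nnegrE // expr1n real_normK ?num_real //.
apply: (@le_trans _ _ (dotv u u)).
  rewrite dotvE (bigD1 j) //= expr2 lerDl.
  by apply: sumr_ge0 => i _; rewrite -expr2 sqr_ge0.
by rewrite -sqr_enorm -(expr1n R 2) ler_pXn2r ?nnegrE ?enorm_ge0.
Qed.

Lemma opappZ A a v : opapp A (a *: v) = a *: opapp A v.
Proof. by rewrite /opapp scalemxAl. Qed.

Lemma opappB A B v : opapp (A - B) v = opapp A v - opapp B v.
Proof. by rewrite /opapp linearB /= mulmxBr. Qed.

Lemma qformZ A a v : qform A (a *: v) = a ^+ 2 * qform A v.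
Proof. by rewrite /qform opappZ dotvZl dotvZr mulrA expr2. Qed.

Lemma qformN A v : qform A (- v) = qform A v.
Proof. by rewrite -scaleN1r qformZ sqrrN expr1n mul1r. Qed.

Lemma qformB A B v : qform A v - qform B v = dotv (opapp (A - B) v) v.
Proof. by rewrite /qform opappB dotvBl. Qed.

Lemma has_ubound_qform_ball A :
  has_ubound [set qform A e | e in [set e | enorm e <= 1]].
Proof.
exists (\sum_j \sum_i `|A j i|) => _ [e /= e1 <-].
rewrite /qform dotvE; apply: (le_trans (ler_norm _)).
apply: (le_trans (ler_norm_sum _ _ _)); apply: ler_sum => j _.
rewrite normrM -[X in _ <= X]mulr1; apply: ler_pM; rewrite ?abs_coord_le1 //.
rewrite /opapp mxE; apply: (le_trans (ler_norm_sum _ _ _)).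
apply: ler_sum => i _; rewrite !mxE normrM -[X in _ <= X]mul1r.
by apply: ler_pM; rewrite ?abs_coord_le1.
Qed.

Lemma qform_le_opnorm A K v : opnorm A <= K -> qform A v <= K * enorm v ^+ 2.
Proof.
move=> AK; have [->|v0] := eqVneq v 0.
  by rewrite -(scale0r 0) qformZ expr0n /= mul0r enormZ // mul0r expr0n mulr0.
have pv : 0 < enorm v by rewrite enorm_gt0.
set e := (enorm v)^-1 *: v.
have e1 : enorm e = 1 by rewrite enormZ ?invr_ge0 ?enorm_ge0 // mulVf ?gt_eqF.
have eA : qform A e <= K.
  apply: le_trans AK; apply: ub_le_sup; first exact: has_ubound_qform_ball.
  by exists e => //=; rewrite e1.
have -> : v = enorm v *: e by rewrite /e scalerA divff ?gt_eqF // scale1r.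
rewrite qformZ enormZ ?enorm_ge0 // e1 mulr1 mulrC.
by rewrite ler_wpM2r ?sqr_ge0.
Qed.

Lemma cmodelZ G H s a v : 0 <= a ->
  cmodel G H s (a *: v) =
    a * dotv G v + 2^-1 * (a ^+ 2 * qform H v) + s / 3 * (a * enorm v) ^+ 3.
Proof. by move=> a0; rewrite /cmodel dotvZr qformZ enormZ. Qed.

End Euclid.

Section RealField.
Variable R : realFieldType.
Implicit Types (a b t x y s S L e l m nu rho dg dH : R).

Lemma cube_le_minM a b t x : 0 <= a -> 0 <= b -> 0 <= t -> 0 <= x ->
  x <= Num.min a b * t -> x ^+ 3 <= a ^+ 2 * b * t ^+ 3.
Proof.
move=> a0 b0 t0 x0 xle; set c := Num.min a b in xle.
have ca : c <= a by rewrite ge_min lexx.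
have cb : c <= b by rewrite ge_min lexx orbT.
have c0 : 0 <= c by rewrite le_min a0.
apply: (@le_trans _ _ ((c * t) ^+ 3)); first by rewrite ler_pXn2r ?nnegrE ?mulr_ge0.
rewrite exprMn ler_wpM2r ?exprn_ge0 // [c ^+ 3]exprSr.
by rewrite ler_pM ?exprn_ge0 // ler_pXn2r.
Qed.

Lemma cubic_error_le x y : 0 <= x -> 0 <= y ->
  27 * x ^+ 2 * y + 6 * x * y ^+ 2 - y ^+ 3 <= 192 * x ^+ 3.
Proof.
move=> x0 y0.
have h1 : 0 <= (y - 5 * x) ^+ 2 * (y + 2 * x) by rewrite mulr_ge0 ?sqr_ge0 ?addr_ge0 ?mulr_ge0.
have h2 : 0 <= (y - 8 * x) ^+ 2 * x by rewrite mulr_ge0 ?sqr_ge0.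
have h3 : 0 <= x ^+ 3 by rewrite exprn_ge0.
have -> : 192 * x ^+ 3 = 27 * x ^+ 2 * y + 6 * x * y ^+ 2 - y ^+ 3 +
   ((y - 5 * x) ^+ 2 * (y + 2 * x) + 2 * ((y - 8 * x) ^+ 2 * x) + 14 * x ^+ 3) by ring.
lra.
Qed.

Lemma sigma_sqr_error_le L s dg dH t : 0 < s -> 2 * L <= s -> 0 <= dH -> 0 <= t ->
  dg <= 9 * dH ^+ 2 / (4 * s) ->
  s ^+ 2 * (L / 2 * t ^+ 3 + dg * t + dH * t ^+ 2 / 2 - s / 3 * t ^+ 3)
    <= 16 * dH ^+ 3.
Proof.
move=> s0 Ls dH0 t0 dgle.
have st0 : 0 <= s * t by rewrite mulr_ge0 // ltW.
have hL : s ^+ 2 * (L / 2 * t ^+ 3) <= (s * t) ^+ 3 / 4.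
  have -> : (s * t) ^+ 3 / 4 = s ^+ 2 * (s / 4 * t ^+ 3) by ring.
  by rewrite ler_wpM2l ?sqr_ge0 // ler_wpM2r ?exprn_ge0 //; lra.
have hg : s ^+ 2 * (dg * t) <= 9 * dH ^+ 2 * (s * t) / 4.
  have -> : 9 * dH ^+ 2 * (s * t) / 4 = s ^+ 2 * (9 * dH ^+ 2 / (4 * s) * t).
    by field; rewrite gt_eqF.
  by rewrite ler_wpM2l ?sqr_ge0 // ler_wpM2r.
have := cubic_error_le dH0 st0.
have -> : s ^+ 2 * (L / 2 * t ^+ 3 + dg * t + dH * t ^+ 2 / 2 - s / 3 * t ^+ 3)
  = s ^+ 2 * (L / 2 * t ^+ 3) + s ^+ 2 * (dg * t) + dH * (s * t) ^+ 2 / 2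
    - (s * t) ^+ 3 / 3 by ring.
lra.
Qed.

Lemma eigen_decrease_ge nu S s e l m : 0 < nu -> 0 < s -> s <= S -> 0 < e -> e < l ->
  nu ^+ 3 * l ^+ 3 / 6 <= s ^+ 2 * m ->
  nu ^+ 3 / (6 * S ^+ 2) * e ^+ 3 <= m.
Proof.
move=> nu0 s0 sS e0 el decr.
have S0 : 0 < S := lt_le_trans s0 sS.
have l0 : 0 < l := lt_trans e0 el.
have m0 : 0 <= m.
  rewrite -(pmulr_rge0 _ (exprn_gt0 2 s0)); apply: le_trans decr.
  by rewrite divr_ge0 // mulr_ge0 // exprn_ge0 // ltW.
have el3 : e ^+ 3 <= l ^+ 3 by rewrite ler_pXn2r ?nnegrE ?(ltW e0) ?(ltW l0) // ltW.
have sS2 : s ^+ 2 * m <= S ^+ 2 * m.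
  by rewrite ler_wpM2r // ler_pXn2r ?nnegrE ?(ltW s0) ?(ltW S0).
rewrite mulrAC ler_pdivrMr ?mulr_gt0 ?exprn_gt0 //.
have : nu ^+ 3 * e ^+ 3 <= nu ^+ 3 * l ^+ 3 by rewrite ler_wpM2l // exprn_ge0 // ltW.
lra.
Qed.

Lemma eigen_accuracy nu s e l m rho dH : 0 < nu -> 0 < e -> e < l -> rho <= 1 ->
  0 <= dH -> nu ^+ 3 * l ^+ 3 / 6 <= s ^+ 2 * m ->
  dH <= Num.min (9^-1) (2 * (1 - rho) / 9) * nu * e ->
  16 * dH ^+ 3 <= (1 - rho) * (s ^+ 2 * m).
Proof.
move=> nu0 e0 el rho1 dH0 decr; rewrite -mulrA => dHle.
have rho1' : 0 <= 1 - rho by rewrite subr_ge0.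
have i9 : 0 <= 9^-1 :> R by rewrite invr_ge0.
have ne0 : 0 <= nu * e by rewrite mulr_ge0 // ltW.
have := cube_le_minM i9 (divr_ge0 (mulr_ge0 (ler0n _ 2) rho1') (ler0n _ 9)) ne0 dH0 dHle.
have : (nu * e) ^+ 3 <= (nu * l) ^+ 3.
  by rewrite ler_pXn2r ?nnegrE ?ler_wpM2l ?(ltW nu0) ?(ltW el) // mulr_ge0 ?(ltW nu0) // ltW // (lt_trans e0).
rewrite !exprMn => nel.
have : (1 - rho) * (nu ^+ 3 * l ^+ 3 / 6) <= (1 - rho) * (s ^+ 2 * m) by rewrite ler_wpM2l.
have : 0 <= (1 - rho) * (nu ^+ 3 * e ^+ 3) by rewrite mulr_ge0 // -exprMn exprn_ge0.
nra.
Qed.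

Lemma maxr_invf a b : 0 < a -> 0 < b -> Num.max a^-1 b^-1 = (Num.min a b)^-1.
Proof.
move=> a0 b0; have [ab|ba] := leP a b.
  by rewrite max_l // lef_pV2.
by rewrite max_r // lef_pV2 // ltW.
Qed.

Lemma decrease_of_ratio_ge (a b m D rho : R) : 0 <= rho -> 0 < D -> D <= m ->
  rho <= (a - b) / m -> b + rho * D <= a.
Proof.
move=> rho0 D0 Dm; rewrite ler_pdivlMr ?(lt_le_trans D0) // => rho_le.
have : rho * D <= rho * m by rewrite ler_wpM2l.
lra.
Qed.

Lemma sigma_bounded (sigma : nat -> R) (succ : nat -> bool) (gamma T S : R) N :
  1 < gamma -> gamma * T <= S -> 0 < sigma 0%N <= S ->
  (forall k, (k <= N)%N -> 0 < sigma k <= S -> T <= sigma k -> succ k) ->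
  (forall k, (k <= N)%N -> succ k -> sigma k.+1 = sigma k / gamma) ->
  (forall k, (k <= N)%N -> ~~ succ k -> sigma k.+1 = gamma * sigma k) ->
  forall k, (k <= N.+1)%N -> 0 < sigma k <= S.
Proof.
move=> g1 gTS sig0 large_succ upd_succ upd_fail; elim=> [//|k IH]; rewrite ltnS => kN.
have /andP[sk0 skS] := IH (leqW kN).
have g0 : 0 < gamma := lt_trans ltr01 g1.
case: (boolP (succ k)) => sk.
  rewrite upd_succ // divr_gt0 //=; apply: le_trans skS.
  by rewrite ler_pdivrMr // ler_peMr // ltW.
rewrite upd_fail // mulr_gt0 //=; apply: le_trans gTS; rewrite ler_pM2l //.
by apply/ltW; rewrite ltNge; apply: contra sk; apply: large_succ; rewrite ?sk0.
Qed.

Lemma card_set_succ_le (phi : nat -> R) (succ : nat -> bool) (D lb : R) N : 0 < D ->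
  (forall k, (k <= N)%N -> succ k -> phi k.+1 + D <= phi k) ->
  (forall k, (k <= N)%N -> ~~ succ k -> phi k.+1 = phi k) ->
  lb <= phi N.+1 ->
  #|[set k : 'I_N.+1 | succ k]|%:R <= (phi 0%N - lb) / D.
Proof.
move=> D0 dec_succ eq_fail lb_le; rewrite ler_pdivlMr //.
have -> : #|[set k : 'I_N.+1 | succ k]|%:R = \sum_(k < N.+1) (succ k)%:R :> R.
  rewrite -sum1_card natr_sum big_mkcond /=; apply: eq_bigr => k _.
  case: (boolP (succ k)) => sk; first by rewrite ifT // mem_set.
  by rewrite ifF //; apply/negP => /set_mem /=; apply/negP.
suff tel j : (j <= N.+1)%N -> (\sum_(k < j) (succ k)%:R) * D <= phi 0%N - phi j.
  by have := tel _ (leqnn _); lra.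
elim: j => [|j IH] jN; first by rewrite big_ord0 mul0r subrr.
rewrite big_ord_recr mulrDl /=.
have := IH (ltnW jN); rewrite ltnS in jN.
case: (boolP (succ j)) => sj; last by rewrite eq_fail // mul0r addr0.
by have := dec_succ j jN sj; rewrite mul1r; lra.
Qed.

End RealField.

Section RealClosedField.
Variable R : rcfType.
Implicit Types (b s S K e g m nu rho dH : R).

Definition cauchy_constant K S := (2 * Num.sqrt 3)^-1 * Num.min K^-1 (Num.sqrt S)^-1.

Lemma cauchy_decrease_ge K S s e g m : 0 < K -> 0 < S -> s <= S ->
  0 < e -> e <= 1 -> e < g ->
  (forall t, 0 <= t -> t * g - K * t ^+ 2 / 2 - s * t ^+ 3 / 3 <= m) ->
  cauchy_constant K S * e ^+ 2 <= m.
Proof.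
move=> K0 S0 sS e0 e1 eg decr; rewrite /cauchy_constant.
have e_ge0 := ltW e0.
set c := Num.min _ _.
have c0 : 0 < c by rewrite lt_min !invr_gt0 K0 sqrtr_gt0.
have Kc : K * c <= 1.
  by rewrite -(divff (lt0r_neq0 K0)) ler_wpM2l ?(ltW K0) // ge_min lexx.
have Sc : S * c ^+ 2 <= 1.
  rewrite -(divff (lt0r_neq0 S0)) ler_wpM2l ?(ltW S0) //.
  have -> : S^-1 = (Num.sqrt S)^-1 ^+ 2 by rewrite exprVn sqr_sqrtr // ltW.
  rewrite ler_pXn2r ?nnegrE ?(ltW c0) ?invr_ge0 ?sqrtr_ge0 //.
  by rewrite ge_min lexx orbT.
have inv2sqrt3 : (2 * Num.sqrt 3)^-1 <= 3^-1 :> R.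
  rewrite lef_pV2 ?posrE ?mulr_gt0 ?sqrtr_gt0 // -(ler_pXn2r (n := 2)) ?nnegrE //.
  by rewrite exprMn sqr_sqrtr // !expr2; lra.
(* the step t = c e / 2 already gains c e^2 / 3 *)
set t := c * e / 2.
have t0 : 0 <= t by rewrite divr_ge0 ?mulr_ge0 ?(ltW c0).
have tg : t * e <= t * g by rewrite ler_wpM2l // ltW.
have sS3 : s * t ^+ 3 <= S * t ^+ 3 by rewrite ler_wpM2r ?exprn_ge0.
have ce2 : 0 <= c * e ^+ 2 by rewrite mulr_ge0 ?sqr_ge0 ?(ltW c0).
have ce3 : c * e ^+ 3 <= c * e ^+ 2.
  by rewrite ler_wpM2l ?(ltW c0) // exprSr ger_pMr ?exprn_gt0.
have q1 : (K * c) * (c * e ^+ 2) <= c * e ^+ 2 by rewrite ler_piMl.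
have q2 : (S * c ^+ 2) * (c * e ^+ 3) <= c * e ^+ 2.
  by apply: le_trans ce3; rewrite ler_piMl ?mulr_ge0 ?exprn_ge0 ?(ltW c0).
have lb : c * e ^+ 2 / 3 <= t * e - K * t ^+ 2 / 2 - S * t ^+ 3 / 3.
  have -> : t * e - K * t ^+ 2 / 2 - S * t ^+ 3 / 3 =
     c * e ^+ 2 / 2 - (K * c) * (c * e ^+ 2) / 8 - (S * c ^+ 2) * (c * e ^+ 3) / 24.
    by rewrite /t; field.
  lra.
have : (2 * Num.sqrt 3)^-1 * c * e ^+ 2 <= 3^-1 * c * e ^+ 2.
  by rewrite -!mulrA ler_wpM2r // mulr_ge0 ?sqr_ge0 ?(ltW c0).
have := decr t t0.
lra.
Qed.

Lemma subr_sqrt_sqrD_ge0 K b : 0 <= K -> 0 <= b -> 0 <= Num.sqrt (K ^+ 2 + b) - K.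
Proof.
move=> K0 b0; rewrite subr_ge0 -[X in X <= _]ger0_norm // -sqrtr_sqr.
by rewrite ler_wsqrtr // lerDl.
Qed.

Lemma cauchy_sigma_decrease_ge K s e g m : 0 < s -> 0 < K -> 0 < e -> e < g ->
  (forall t, 0 <= t -> t * g - K * t ^+ 2 / 2 - s * t ^+ 3 / 3 <= m) ->
  (Num.sqrt (K ^+ 2 + 4 * s * e) - K) ^+ 3 / 12 <= s ^+ 2 * m.
Proof.
move=> s0 K0 e0 eg decr.
set a := Num.sqrt _ - K.
have aK : a ^+ 2 + 2 * a * K = 4 * s * e.
  have : (a + K) ^+ 2 = K ^+ 2 + 4 * s * e.
    by rewrite subrK sqr_sqrtr // addr_ge0 ?sqr_ge0 // !mulr_ge0 // ltW.
  by move=> h; apply: (addIr (K ^+ 2)); rewrite [4 * s * e + _]addrC -h; ring.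
have a0 : 0 <= a by rewrite subr_sqrt_sqrD_ge0 ?mulr_ge0 // ltW.
(* a / (2 s) maximises t e - K t^2 / 2 - s t^3 / 3 *)
set t := a / (2 * s).
have st : s * t = a / 2 by rewrite /t; field; rewrite gt_eqF.
have : s ^+ 2 * (t * g - K * t ^+ 2 / 2 - s * t ^+ 3 / 3) <= s ^+ 2 * m.
  by rewrite ler_wpM2l ?sqr_ge0 // decr // divr_ge0 // mulr_ge0 // ltW.
have -> : s ^+ 2 * (t * g - K * t ^+ 2 / 2 - s * t ^+ 3 / 3) =
   (s * t) * s * g - K * (s * t) ^+ 2 / 2 - (s * t) ^+ 3 / 3 by ring.
rewrite st; apply: le_trans.
have : a * s * e <= a * s * g by rewrite ler_wpM2l ?mulr_ge0 // ltW.
nra.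
Qed.

Lemma cauchy_accuracy K s e g m rho dH : 0 < s -> 0 < K -> 0 < e -> e < g ->
  rho <= 1 -> 0 <= dH ->
  (forall t, 0 <= t -> t * g - K * t ^+ 2 / 2 - s * t ^+ 3 / 3 <= m) ->
  dH <= Num.min (18^-1) ((1 - rho) / 9) * (Num.sqrt (K ^+ 2 + 4 * s * e) - K) ->
  16 * dH ^+ 3 <= (1 - rho) * (s ^+ 2 * m).
Proof.
move=> s0 K0 e0 eg rho1 dH0 decr dHle.
set a := Num.sqrt _ - K in dHle.
have a0 : 0 <= a by rewrite subr_sqrt_sqrD_ge0 ?mulr_ge0 // ltW.
have am := cauchy_sigma_decrease_ge s0 K0 e0 eg decr.
have rho1' : 0 <= 1 - rho by rewrite subr_ge0.
have i18 : 0 <= 18^-1 :> R by rewrite invr_ge0.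
have := cube_le_minM i18 (divr_ge0 rho1' (ler0n _ 9)) a0 dH0 dHle.
have : (1 - rho) * (a ^+ 3 / 12) <= (1 - rho) * (s ^+ 2 * m) by rewrite ler_wpM2l.
have : 0 <= (1 - rho) * a ^+ 3 by rewrite mulr_ge0 ?exprn_ge0.
nra.
Qed.

Definition decrease_constant nu K S :=
  Num.min (nu ^+ 3 / (6 * S ^+ 2)) (cauchy_constant K S).

Lemma decrease_constant_gt0 nu K S : 0 < nu -> 0 < K -> 0 < S ->
  0 < decrease_constant nu K S.
Proof.
move=> nu0 K0 S0; rewrite /decrease_constant /cauchy_constant.
rewrite lt_min divr_gt0 ?mulr_gt0 ?exprn_gt0 ?invr_gt0 ?sqrtr_gt0 //=.
by rewrite lt_min !invr_gt0 K0 sqrtr_gt0.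
Qed.

End RealClosedField.

Section Iteration.
Variables (R : realType) (d : nat).
Variables (G : 'rV[R]_d) (H : 'M[R]_d) (s : R) (eta : 'rV[R]_d).
Hypothesis s_gt0 : 0 < s.

Lemma cauchy_point_decrease K : opnorm H <= K -> 0 < enorm G ->
  (exists alphaC, is_argmin_ray G H s (- G) alphaC /\
     - cmodel G H s (alphaC *: (- G)) <= - cmodel G H s eta) ->
  forall t, 0 <= t -> t * enorm G - K * t ^+ 2 / 2 - s * t ^+ 3 / 3
     <= - cmodel G H s eta.
Proof.
move=> HK G0 [aC [[_ aCmin] aCeta] t t0]; apply: le_trans aCeta.
have b0 : 0 <= t / enorm G by rewrite divr_ge0 // ltW.
apply: (@le_trans _ _ (- cmodel G H s ((t / enorm G) *: - G))); last first.
  by rewrite lerN2 aCmin.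
rewrite cmodelZ // dotvNr enormN qformN -sqr_enorm divfK ?gt_eqF //.
have : (t / enorm G) ^+ 2 * qform H G <= K * t ^+ 2.
  have -> : K * t ^+ 2 = (t / enorm G) ^+ 2 * (K * enorm G ^+ 2).
    by field; rewrite gt_eqF.
  by rewrite ler_wpM2l ?sqr_ge0 ?qform_le_opnorm.
have -> : t / enorm G * - enorm G ^+ 2 = - (t * enorm G).
  by field; rewrite gt_eqF.
lra.
Qed.

Lemma eigenpoint_decrease nu lam u alphaE : 0 < nu ->
  qform H u <= nu * lam * enorm u ^+ 2 -> nu * lam * enorm u ^+ 2 < 0 ->
  dotv G u <= 0 -> is_argmin_ray G H s u alphaE ->
  - cmodel G H s (alphaE *: u) <= - cmodel G H s eta ->
  nu ^+ 3 * (- lam) ^+ 3 / 6 <= s ^+ 2 * - cmodel G H s eta.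
Proof.
move=> nu0 Hu neg Gu [_ aEmin] aEeta.
have u0 : 0 < enorm u.
  by rewrite enorm_gt0; apply: contraTneq neg => ->; rewrite -(scale0r 0) enormZ // mul0r expr0n mulr0 ltxx.
have lam0 : lam < 0.
  by move: neg; rewrite pmulr_llt0 ?exprn_gt0 // pmulr_rlt0.
set l := - lam; have l0 : 0 < l by rewrite oppr_gt0.
(* the eigenpoint does at least as well as the step of length nu l / s along u *)
set b := nu * l / (s * enorm u).
have b0 : 0 <= b by rewrite divr_ge0 ?mulr_ge0 // ltW.
have := aEmin _ b0; rewrite cmodelZ //.
have -> : b * enorm u = nu * l / s by rewrite /b; field; rewrite ?gt_eqF.
have Gb : b * dotv G u <= 0 by rewrite mulr_ge0_le0.
have Hb : b ^+ 2 * qform H u <= - (nu * l) * (nu * l / s) ^+ 2.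
  have -> : - (nu * l) * (nu * l / s) ^+ 2 = b ^+ 2 * (nu * lam * enorm u ^+ 2).
    by rewrite /b /l; field; rewrite ?gt_eqF.
  by rewrite ler_wpM2l ?sqr_ge0.
have -> : nu ^+ 3 * l ^+ 3 / 6 =
  s ^+ 2 * (nu * l * (nu * l / s) ^+ 2 / 2 - s / 3 * (nu * l / s) ^+ 3).
  by field; rewrite gt_eqF.
move=> aEb; rewrite ler_wpM2l ?sqr_ge0 //.
lra.
Qed.

Lemma model_error_le (g : 'rV[R]_d) (Hs : 'M[R]_d) (fx fR L dg dH : R) :
  `| fR - fx - dotv g eta - 2^-1 * qform Hs eta | <= 2^-1 * L * enorm eta ^+ 3 ->
  enorm (G - g) <= dg /\ enorm (opapp (H - Hs) eta) <= dH * enorm eta ->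
  fR - fx - cmodel G H s eta <=
  L / 2 * enorm eta ^+ 3 + dg * enorm eta + dH * enorm eta ^+ 2 / 2
    - s / 3 * enorm eta ^+ 3.
Proof.
move=> taylor [gdg HdH].
have -> : fR - fx - cmodel G H s eta =
  (fR - fx - dotv g eta - 2^-1 * qform Hs eta) + dotv (G - g) (- eta)
  + 2^-1 * dotv (opapp (H - Hs) eta) (- eta) - s / 3 * enorm eta ^+ 3.
  by rewrite /cmodel !dotvNr dotvBl -qformB; ring.
have := dotv_le_enorm (G - g) (- eta); have := dotv_le_enorm (opapp (H - Hs) eta) (- eta).
rewrite enormN => csH csg.
have eta0 := enorm_ge0 eta.
have : enorm (G - g) * enorm eta <= dg * enorm eta by rewrite ler_wpM2r.
have : enorm (opapp (H - Hs) eta) * enorm eta <= dH * enorm eta ^+ 2.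
  by rewrite expr2 mulrA ler_wpM2r.
have := ler_norm (fR - fx - dotv g eta - 2^-1 * qform Hs eta).
lra.
Qed.

Variables (eps_g eps_H nu K : R).
Hypotheses (eps_g_gt0 : 0 < eps_g) (eps_g_le1 : eps_g <= 1) (eps_H_gt0 : 0 < eps_H).
Hypotheses (nu_gt0 : 0 < nu) (K_gt0 : 0 < K).
Hypothesis not_stopped : ~ (enorm G <= eps_g /\ - eps_H <= lam_min H).
Hypothesis opnormH : opnorm H <= K.
Hypothesis cauchy_point :
  exists alphaC, is_argmin_ray G H s (- G) alphaC /\
    - cmodel G H s (alphaC *: (- G)) <= - cmodel G H s eta.
Hypothesis eigenpoint :
  lam_min H < 0 -> exists u alphaE,
    qform H u <= nu * lam_min H * enorm u ^+ 2 /\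
    nu * lam_min H * enorm u ^+ 2 < 0 /\
    dotv G u <= 0 /\
    is_argmin_ray G H s u alphaE /\
    - cmodel G H s (alphaE *: u) <= - cmodel G H s eta.

Local Notation decr := (- cmodel G H s eta).

Lemma decrease_cases :
  (eps_g < enorm G /\ forall t, 0 <= t ->
     t * enorm G - K * t ^+ 2 / 2 - s * t ^+ 3 / 3 <= decr)
  \/ (eps_H < - lam_min H /\ nu ^+ 3 * (- lam_min H) ^+ 3 / 6 <= s ^+ 2 * decr).
Proof.
have [Gle|Ggt] := lerP (enorm G) eps_g; last first.
  by left; split=> //; apply: cauchy_point_decrease => //; apply: lt_trans Ggt.
have lam_lt : lam_min H < - eps_H.
  by rewrite ltNge; apply/negP => lam_ge; apply: not_stopped.
right; split; first by rewrite ltrNr.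
have [|u [aE [Hu [neg [Gu [aEmin aEeta]]]]]] := eigenpoint.
  by apply: lt_trans lam_lt _; rewrite oppr_lt0.
exact: eigenpoint_decrease Hu neg Gu aEmin aEeta.
Qed.

Lemma model_decrease_ge S : s <= S ->
  decrease_constant nu K S * Num.min (eps_g ^+ 2) (eps_H ^+ 3) <= decr.
Proof.
move=> sS; have S0 := lt_le_trans s_gt0 sS.
have dc0 := ltW (decrease_constant_gt0 nu_gt0 K_gt0 S0).
have mn0 : 0 <= Num.min (eps_g ^+ 2) (eps_H ^+ 3) by rewrite le_min !exprn_ge0 // ltW.
case: decrease_cases => [[Ggt Gdecr]|[lam_gt lam_decr]].
  apply: le_trans (cauchy_decrease_ge K_gt0 S0 sS eps_g_gt0 eps_g_le1 Ggt Gdecr).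
  by apply: ler_pM => //; rewrite ge_min lexx // orbT.
apply: le_trans (eigen_decrease_ge nu_gt0 s_gt0 sS eps_H_gt0 lam_gt lam_decr).
by apply: ler_pM => //; rewrite ge_min lexx // orbT.
Qed.

Lemma model_decrease_gt0 : 0 < decr.
Proof.
apply: lt_le_trans (model_decrease_ge (lexx s)).
by rewrite mulr_gt0 ?decrease_constant_gt0 // lt_min !exprn_gt0.
Qed.

Lemma accuracy_decrease rho dH : rho <= 1 -> 0 <= dH ->
  dH <= Num.min
    (Num.min (18^-1) ((1 - rho) / 9) * (Num.sqrt (K ^+ 2 + 4 * s * eps_g) - K))
    (Num.min (9^-1) (2 * (1 - rho) / 9) * nu * eps_H) ->
  16 * dH ^+ 3 <= (1 - rho) * (s ^+ 2 * decr).
Proof.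
rewrite le_min => rho1 dH0 /andP[dHg dHH].
case: decrease_cases => [[Ggt Gdecr]|[lam_gt lam_decr]].
  exact: cauchy_accuracy s_gt0 K_gt0 eps_g_gt0 Ggt rho1 dH0 Gdecr dHg.
exact: eigen_accuracy nu_gt0 eps_H_gt0 lam_gt rho1 dH0 lam_decr dHH.
Qed.

Lemma iteration_estimates (S : R) (g : 'rV[R]_d) (Hs : 'M[R]_d) (fx fR L rho dg dH : R) :
  s <= S -> rho <= 1 -> 0 <= dH ->
  `| fR - fx - dotv g eta - 2^-1 * qform Hs eta | <= 2^-1 * L * enorm eta ^+ 3 ->
  enorm (G - g) <= dg /\ enorm (opapp (H - Hs) eta) <= dH * enorm eta ->
  dg <= 9 * dH ^+ 2 / (4 * s) /\
  dH <= Num.min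
    (Num.min (18^-1) ((1 - rho) / 9) * (Num.sqrt (K ^+ 2 + 4 * s * eps_g) - K))
    (Num.min (9^-1) (2 * (1 - rho) / 9) * nu * eps_H) ->
  decrease_constant nu K S * Num.min (eps_g ^+ 2) (eps_H ^+ 3) <= decr
  /\ (2 * L <= s -> rho <= (fx - fR) / decr).
Proof.
move=> sS rho1 dH0 taylor errs [dgle dHle]; split; first exact: model_decrease_ge.
move=> Ls; have decr0 := model_decrease_gt0.
have err := model_error_le taylor errs.
have sqr_err := le_trans (sigma_sqr_error_le s_gt0 Ls dH0 (enorm_ge0 eta) dgle)
  (accuracy_decrease rho1 dH0 dHle).
have : s ^+ 2 * (fR - fx + decr) <= s ^+ 2 * ((1 - rho) * decr).
  rewrite mulrCA; apply: le_trans sqr_err.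
  by rewrite ler_wpM2l ?sqr_ge0 //; lra.
rewrite ler_pM2l ?exprn_gt0 // ler_pdivlMr //.
lra.
Qed.

End Iteration.

Unset Implicit Arguments. Set Strict Implicit.

Theorem lemma3p8
  (R : realType) (d : nat) (M : Type) (n : nat) (fs : 'I_n -> M -> R)
  (Retr : M -> 'rV[R]_d -> M)
  (eps_g eps_H rho_TH gamma sigma0 nu L_H K_H delta_g delta_H : R)
  (x0 : M) (x : nat -> M) (sigma : nat -> R)
  (G : nat -> 'rV[R]_d) (H : nat -> 'M[R]_d) (eta : nat -> 'rV[R]_d)
  (N : nat) (fmin : R) :
  (0 < n)%N ->
  (forall y, Retr y 0 = y) ->
  (forall i y, C2 (fun v => fs i (Retr y v))) ->
  0 < eps_g < 1 -> 0 < eps_H < 1 -> 0 < rho_TH < 1 -> 1 < gamma ->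
  0 < sigma0 -> 0 < nu < 1 ->
  0 < L_H -> 0 < K_H -> 0 < delta_g < 1 -> 0 < delta_H < 1 ->
  sigma0 <= 2 * gamma * L_H ->
  x 0%N = x0 -> sigma 0%N = sigma0 ->
  let f := favg fs in
  let rho k := (f (x k) - f (Retr (x k) (eta k)))
                 / (- cmodel (G k) (H k) (sigma k) (eta k)) in
  (* the algorithm runs iterations 0..N without terminating *)
  (forall k, (k <= N)%N ->
     (H k)^T = H k /\
     ~ (enorm (G k) <= eps_g /\ - eps_H <= lam_min (H k)) /\
     (rho_TH <= rho k ->
        x k.+1 = Retr (x k) (eta k) /\ sigma k.+1 = sigma k / gamma) /\
     (rho k < rho_TH -> x k.+1 = x k /\ sigma k.+1 = gamma * sigma k)) ->
  (* (A1) *)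
  (forall k, (k <= N)%N ->
     `| f (Retr (x k) (eta k)) - f (x k)
        - dotv (grad0 (fun v => f (Retr (x k) v))) (eta k)
        - 2^-1 * qform (hess0 (fun v => f (Retr (x k) v))) (eta k) |
     <= 2^-1 * L_H * enorm (eta k) ^+ 3) ->
  (* (A2) *)
  (forall k, (k <= N)%N -> opnorm (H k) <= K_H) ->
  (* (A3) *)
  (forall k, (k <= N)%N ->
     enorm (G k - grad0 (fun v => f (Retr (x k) v))) <= delta_g /\
     enorm (opapp (H k - hess0 (fun v => f (Retr (x k) v))) (eta k))
       <= delta_H * enorm (eta k)) ->
  (* (A4) : Cauchy point *)
  (forall k, (k <= N)%N ->
     exists alphaC, is_argmin_ray (G k) (H k) (sigma k) (- G k) alphaC /\
       - cmodel (G k) (H k) (sigma k) (alphaC *: (- G k))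
         <= - cmodel (G k) (H k) (sigma k) (eta k)) ->
  (* (A4) : eigenpoint *)
  (forall k, (k <= N)%N -> lam_min (H k) < 0 ->
     exists u alphaE,
       qform (H k) u <= nu * lam_min (H k) * enorm u ^+ 2 /\
       nu * lam_min (H k) * enorm u ^+ 2 < 0 /\
       dotv (G k) u <= 0 /\
       is_argmin_ray (G k) (H k) (sigma k) u alphaE /\
       - cmodel (G k) (H k) (sigma k) (alphaE *: u)
         <= - cmodel (G k) (H k) (sigma k) (eta k)) ->
  (* accuracy conditions *)
  (forall k, (k <= N)%N ->
     delta_g <= 9 * delta_H ^+ 2 / (4 * sigma k) /\
     delta_H <= Num.min
       (Num.min (18^-1) ((1 - rho_TH) / 9)
          * (Num.sqrt (K_H ^+ 2 + 4 * sigma k * eps_g) - K_H))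
       (Num.min (9^-1) (2 * (1 - rho_TH) / 9) * nu * eps_H)) ->
  (* f attains its minimum fmin *)
  (exists y, f y = fmin) -> (forall y, fmin <= f y) ->
  let kappa_sigma :=
    Num.min (nu ^+ 3 / (24 * gamma ^+ 2 * L_H ^+ 2))
      ((2 * Num.sqrt 3)^-1 *
         Num.min (K_H^-1) ((Num.sqrt (2 * gamma * L_H))^-1)) in
  (#|[set k : 'I_N.+1 | rho_TH <= rho k]|)%:R
    <= (f x0 - fmin) / (rho_TH * kappa_sigma)
         * Num.max (eps_g ^- 2) (eps_H ^- 3) + 1.
Proof.
move=> _ _ _ /andP[eg0 eg1] /andP[eH0 _] /andP[rho0 rho1] g1 s0 /andP[nu0 _] L0 K0 _
  /andP[dH0 _] s0le x0E s0E f rho run A1 A2 A3 cauchy eigen acc _ fmin_le.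
set S := 2 * gamma * L_H; set mn := Num.min (eps_g ^+ 2) (eps_H ^+ 3).
rewrite [in X in is_true X]/= (_ : Num.min (nu ^+ 3 / _) _ = decrease_constant nu K_H S).
  2: by rewrite /decrease_constant /cauchy_constant /S; congr Num.min; congr (_ / _); ring.
have S0 : 0 < S by rewrite /S !mulr_gt0 // (lt_trans ltr01).
have step k : (k <= N)%N -> 0 < sigma k <= S ->
    decrease_constant nu K_H S * mn <= - cmodel (G k) (H k) (sigma k) (eta k)
    /\ (2 * L_H <= sigma k -> rho_TH <= rho k).
  move=> kN /andP[sk0 skS]; have [_ [stop _]] := run k kN.
  exact: (iteration_estimates sk0 eg0 (ltW eg1) eH0 nu0 K0 stop (A2 k kN) (cauchy k kN)
    (eigen k kN) skS (ltW rho1) (ltW dH0) (A1 k kN) (A3 k kN) (acc k kN)).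
have sigma_le k : (k <= N.+1)%N -> 0 < sigma k <= S.
  apply: (sigma_bounded (succ := fun k => rho_TH <= rho k) (T := 2 * L_H) g1) => //.
  - by rewrite /S mulrCA mulrA.
  - by rewrite s0E s0.
  - by move=> {}k kN /(step k kN) [].
  - by move=> {}k kN /(run k kN).2.2.1 [].
  - by move=> {}k kN; rewrite -ltNge => /(run k kN).2.2.2 [].
have kappa_mn0 : 0 < decrease_constant nu K_H S * mn.
  by rewrite mulr_gt0 ?decrease_constant_gt0 // lt_min !exprn_gt0.
apply: le_trans (card_set_succ_le (phi := fun k => f (x k))
  (succ := fun k => rho_TH <= rho k) (mulr_gt0 rho0 kappa_mn0) _ _ (fmin_le (x N.+1))) _.
- move=> k kN succ_k; have [-> _] := (run k kN).2.2.1 succ_k.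
  have [decr_ge _] := step k kN (sigma_le k (leqW kN)).
  exact: decrease_of_ratio_ge (ltW rho0) kappa_mn0 decr_ge succ_k.
- by move=> k kN; rewrite -ltNge => /(run k kN).2.2.2 [-> _].
by rewrite x0E maxr_invf ?exprn_gt0 // -/mn -mulrA -invfM -mulrA lerDl.
Qed.
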